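(* Let $F$ be a scalar group, $I$ an index set, and $\{V_i\}_{i\in I}$ a family of near-vector spaces over $F$. Let $\bigoplus_{i\in I}V_i=\{(v_i)_{i\in I}\in\prod_{i\in I}V_i : v_i=0\text{ for all but finitely many } i\}$, with componentwise addition and scalar multiplication, and for each $i\in I$ let $\iota_i:V_i\to\bigoplus_{j\in I}V_j$ send $v$ to the family whose $i$-th entry is $v$ and all other entries are $0$. Then: (1) $\bigoplus_{i\in I}V_i$ is a near-vector space over $F$ and each $\iota_i$ is $F$-linear; (2) $\bigl(\bigoplus_{i\in I}V_i,\{\iota_i\}_{i\in I}\bigr)$ is a coproduct of the family $\{V_i\}_{i\in I}$ in the category of near-vector spaces over $F$ (with $F$-linear maps as morphisms).
   Context: A scalar group is a tuple $(F,\cdot,1,0,-1)$ where $(F,\cdot,1)$ is a monoid, $0\cdot\alpha=0=\alpha\cdot0$, $\{\pm1\}$ is the solution set of $x^2=1$, and $F\setminus\{0\}$ is a group under $\cdot$. An $F$-space is an abelian group $V$ with a left action of $(F,\cdot)$ by group endomorphisms such that $0,1,-1$ act as $0,\mathrm{id},-\mathrm{id}$. The quasi-kernel is $Q(V)=\{u\in V:\forall\alpha,\beta\in F\ \exists\gamma\in F,\ \alpha u+\beta u=\gamma u\}$. A near-vector space over $F$ is an $F$-space with free action (for $u\ne0$, $\alpha u=\beta u\Rightarrow\alpha=\beta$) such that $Q(V)$ generates $V$ as an additive group. An $F$-linear map is an additive homomorphism $\phi$ with $\phi(\alpha u)=\alpha\phi(u)$ for all $\alpha\in F$. *)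

From Stdlib Require Import List ClassicalDescription FunctionalExtensionality ProofIrrelevance.
Set Implicit Arguments.

Record scalar_group := ScalarGroup {
  sg_car :> Type;
  sg_mul : sg_car -> sg_car -> sg_car;
  sg_one : sg_car;
  sg_zero : sg_car;
  sg_mone : sg_car;
  sg_mulA : forall a b c, sg_mul a (sg_mul b c) = sg_mul (sg_mul a b) c;
  sg_mul1l : forall a, sg_mul sg_one a = a;
  sg_mul1r : forall a, sg_mul a sg_one = a;
  sg_mul0l : forall a, sg_mul sg_zero a = sg_zero;
  sg_mul0r : forall a, sg_mul a sg_zero = sg_zero;
  sg_sqr1 : forall x, sg_mul x x = sg_one <-> (x = sg_one \/ x = sg_mone);
  sg_one_neq0 : sg_one <> sg_zero;
  sg_mul_neq0 : forall a b, a <> sg_zero -> b <> sg_zero -> sg_mul a b <> sg_zero;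
  sg_inv : forall a, a <> sg_zero ->
    exists b, b <> sg_zero /\ sg_mul a b = sg_one /\ sg_mul b a = sg_one
}.

Record fspace (F : scalar_group) := FSpace {
  fs_car :> Type;
  fs_add : fs_car -> fs_car -> fs_car;
  fs_zero : fs_car;
  fs_opp : fs_car -> fs_car;
  fs_addA : forall u v w, fs_add u (fs_add v w) = fs_add (fs_add u v) w;
  fs_addC : forall u v, fs_add u v = fs_add v u;
  fs_add0 : forall u, fs_add fs_zero u = u;
  fs_addN : forall u, fs_add (fs_opp u) u = fs_zero;
  fs_act : F -> fs_car -> fs_car;
  fs_actD : forall a u v, fs_act a (fs_add u v) = fs_add (fs_act a u) (fs_act a v);
  fs_actM : forall a b u, fs_act (sg_mul F a b) u = fs_act a (fs_act b u);
  fs_act1 : forall u, fs_act (sg_one F) u = u;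
  fs_act0 : forall u, fs_act (sg_zero F) u = fs_zero;
  fs_actN1 : forall u, fs_act (sg_mone F) u = fs_opp u
}.

Section NVS.
Variable F : scalar_group.

Definition quasi_kernel (V : fspace F) (u : V) : Prop :=
  forall a b : F, exists c : F, fs_add V (fs_act V a u) (fs_act V b u) = fs_act V c u.

Inductive add_gen (V : fspace F) (P : V -> Prop) : V -> Prop :=
  | ag_base : forall u, P u -> add_gen V P u
  | ag_zero : add_gen V P (fs_zero V)
  | ag_add : forall u v, add_gen V P u -> add_gen V P v -> add_gen V P (fs_add V u v)
  | ag_opp : forall u, add_gen V P u -> add_gen V P (fs_opp V u).

Definition free_action (V : fspace F) : Prop :=
  forall (u : V) (a b : F), u <> fs_zero V -> fs_act V a u = fs_act V b u -> a = b.

Definition near_vector_space (V : fspace F) : Prop :=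
  free_action V /\ forall v : V, add_gen V (quasi_kernel V) v.

Definition flinear (V W : fspace F) (phi : V -> W) : Prop :=
  (forall u v : V, phi (fs_add V u v) = fs_add W (phi u) (phi v)) /\
  (forall (a : F) (u : V), phi (fs_act V a u) = fs_act W a (phi u)).

Lemma fs_act_zero (V : fspace F) (a : F) : fs_act V a (fs_zero V) = fs_zero V.
Proof.
  rewrite <- (fs_act0 V (fs_zero V)) at 1.
  rewrite <- fs_actM, sg_mul0r. apply fs_act0.
Qed.

Lemma fs_opp_zero (V : fspace F) : fs_opp V (fs_zero V) = fs_zero V.
Proof. rewrite <- fs_actN1. apply fs_act_zero. Qed.

Lemma fs_add_zero (V : fspace F) : fs_add V (fs_zero V) (fs_zero V) = fs_zero V.
Proof. apply fs_add0. Qed.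

Section DirectSum.
Variables (I : Type) (V : I -> fspace F).

Definition finsupp (v : forall i, V i) : Prop :=
  exists s : list I, forall i, ~ In i s -> v i = fs_zero (V i).

Definition ds_car : Type := {v : forall i, V i | finsupp v}.

Lemma ds_eq (x y : ds_car) : (forall i, proj1_sig x i = proj1_sig y i) -> x = y.
Proof.
  destruct x as [x px], y as [y py]; simpl; intro H.
  assert (E : x = y) by (apply functional_extensionality_dep; exact H).
  subst y. f_equal. apply proof_irrelevance.
Qed.

Lemma finsupp_add (x y : forall i, V i) : finsupp x -> finsupp y ->
  finsupp (fun i => fs_add (V i) (x i) (y i)).
Proof.
  intros [s Hs] [t Ht]. exists (s ++ t). intros i Hi.
  rewrite Hs, Ht. apply fs_add_zero.
  - intro H; apply Hi; apply in_or_app; right; exact H.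
  - intro H; apply Hi; apply in_or_app; left; exact H.
Qed.

Lemma finsupp_zero : finsupp (fun i => fs_zero (V i)).
Proof. exists nil. intros; reflexivity. Qed.

Lemma finsupp_opp (x : forall i, V i) : finsupp x -> finsupp (fun i => fs_opp (V i) (x i)).
Proof. intros [s Hs]. exists s. intros i Hi. rewrite Hs by exact Hi. apply fs_opp_zero. Qed.

Lemma finsupp_act (a : F) (x : forall i, V i) : finsupp x ->
  finsupp (fun i => fs_act (V i) a (x i)).
Proof. intros [s Hs]. exists s. intros i Hi. rewrite Hs by exact Hi. apply fs_act_zero. Qed.

Definition ds_add (x y : ds_car) : ds_car :=
  exist _ _ (finsupp_add (proj2_sig x) (proj2_sig y)).
Definition ds_zero : ds_car := exist _ _ finsupp_zero.
Definition ds_opp (x : ds_car) : ds_car := exist _ _ (finsupp_opp (proj2_sig x)).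
Definition ds_act (a : F) (x : ds_car) : ds_car := exist _ _ (finsupp_act a (proj2_sig x)).

Lemma ds_addA : forall u v w, ds_add u (ds_add v w) = ds_add (ds_add u v) w.
Proof. intros; apply ds_eq; intro i; simpl; apply fs_addA. Qed.
Lemma ds_addC : forall u v, ds_add u v = ds_add v u.
Proof. intros; apply ds_eq; intro i; simpl; apply fs_addC. Qed.
Lemma ds_add0 : forall u, ds_add ds_zero u = u.
Proof. intros; apply ds_eq; intro i; simpl; apply fs_add0. Qed.
Lemma ds_addN : forall u, ds_add (ds_opp u) u = ds_zero.
Proof. intros; apply ds_eq; intro i; simpl; apply fs_addN. Qed.
Lemma ds_actD : forall a u v, ds_act a (ds_add u v) = ds_add (ds_act a u) (ds_act a v).
Proof. intros; apply ds_eq; intro i; simpl; apply fs_actD. Qed.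
Lemma ds_actM : forall a b u, ds_act (sg_mul F a b) u = ds_act a (ds_act b u).
Proof. intros; apply ds_eq; intro i; simpl; apply fs_actM. Qed.
Lemma ds_act1 : forall u, ds_act (sg_one F) u = u.
Proof. intros; apply ds_eq; intro i; simpl; apply fs_act1. Qed.
Lemma ds_act0 : forall u, ds_act (sg_zero F) u = ds_zero.
Proof. intros; apply ds_eq; intro i; simpl; apply fs_act0. Qed.
Lemma ds_actN1 : forall u, ds_act (sg_mone F) u = ds_opp u.
Proof. intros; apply ds_eq; intro i; simpl; apply fs_actN1. Qed.

Definition direct_sum : fspace F :=
  @FSpace F ds_car ds_add ds_zero ds_opp ds_addA ds_addC ds_add0 ds_addN
    ds_act ds_actD ds_actM ds_act1 ds_act0 ds_actN1.

Definition inj_fun (i : I) (v : V i) : forall j, V j :=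
  fun j => match excluded_middle_informative (i = j) with
           | left e => eq_rect i V v j e
           | right _ => fs_zero (V j)
           end.

Lemma finsupp_inj (i : I) (v : V i) : finsupp (inj_fun i v).
Proof.
  exists (i :: nil). intros j Hj. unfold inj_fun.
  destruct (excluded_middle_informative (i = j)) as [e|e].
  - exfalso. apply Hj. left. exact e.
  - reflexivity.
Qed.

Definition ds_inj (i : I) (v : V i) : direct_sum := exist _ _ (finsupp_inj i v).

End DirectSum.
End NVS.

(* Every finitely supported family x is the finite sum of the injections of its
   nonzero entries.  This gives an induction principle for the direct sum,
   from which generation by quasi-kernel elements and uniqueness of the
   mediating map follow at once.  Freeness of the action is checked on one
   nonzero entry.  The mediating map sends x to the sum of the f j (x j) over a
   support list of x; repeated indices are counted once by zeroing the j-th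
   entry after using it, which makes the value independent of the list. *)

From Stdlib Require Import List ClassicalDescription FunctionalExtensionality
  Classical.
From Stdlib Require ClassicalEpsilon.
Set Implicit Arguments.

Section FSpaceFacts.
Variable F : scalar_group.

Lemma fs_addr0 (A : fspace F) (u : A) : fs_add A u (fs_zero A) = u.
Proof. rewrite fs_addC. apply fs_add0. Qed.

Lemma fs_addCA (A : fspace F) (u v w : A) :
  fs_add A u (fs_add A v w) = fs_add A v (fs_add A u w).
Proof. rewrite !fs_addA, (fs_addC A u v). reflexivity. Qed.

Lemma flinear_zero (A B : fspace F) (phi : A -> B) :
  flinear A B phi -> phi (fs_zero A) = fs_zero B.
Proof. intros [_ Hact]. rewrite <- (fs_act0 A (fs_zero A)), Hact. apply fs_act0. Qed.

Lemma flinear_opp (A B : fspace F) (phi : A -> B) :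
  flinear A B phi -> forall u, phi (fs_opp A u) = fs_opp B (phi u).
Proof. intros [_ Hact] u. rewrite <- fs_actN1, Hact. apply fs_actN1. Qed.

Lemma flinear_quasi_kernel (A B : fspace F) (phi : A -> B) :
  flinear A B phi -> forall u, quasi_kernel A u -> quasi_kernel B (phi u).
Proof.
  intros [Hadd Hact] u Hu a b. destruct (Hu a b) as [c Hc].
  exists c. rewrite <- !Hact, <- Hadd, Hc. reflexivity.
Qed.

Lemma flinear_add_gen (A B : fspace F) (phi : A -> B) :
  flinear A B phi ->
  forall u, add_gen A (quasi_kernel A) u -> add_gen B (quasi_kernel B) (phi u).
Proof.
  intros Hphi u Hu. induction Hu as [u Hu| |u v _ IHu _ IHv|u _ IHu].
  - apply ag_base. exact (flinear_quasi_kernel Hphi Hu).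
  - rewrite (flinear_zero Hphi). apply ag_zero.
  - rewrite (proj1 Hphi). apply ag_add; assumption.
  - rewrite (flinear_opp Hphi). apply ag_opp; assumption.
Qed.

End FSpaceFacts.

Section DirectSum.
Variables (F : scalar_group) (I : Type) (V : I -> fspace F).

Local Notation DS := (direct_sum V).
Local Notation zero := (fun i => fs_zero (V i)).

Definition supported (s : list I) (x : forall i, V i) : Prop :=
  forall i, ~ In i s -> x i = fs_zero (V i).

Lemma supported_incl s t x : incl s t -> supported s x -> supported t x.
Proof. intros Hst Hs i Hi. apply Hs. intro H. apply Hi, Hst, H. Qed.

Lemma supported_nil x : supported nil x -> x = zero.
Proof. intro Hx. apply functional_extensionality_dep. intro i. apply Hx, in_nil. Qed.

Lemma supported_add s x y : supported s x -> supported s y ->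
  supported s (fun i => fs_add (V i) (x i) (y i)).
Proof. intros Hx Hy i Hi. rewrite Hx, Hy by exact Hi. apply fs_add_zero. Qed.

Lemma supported_act s a x : supported s x ->
  supported s (fun i => fs_act (V i) a (x i)).
Proof. intros Hx i Hi. rewrite Hx by exact Hi. apply fs_act_zero. Qed.

Lemma inj_fun_same i (v : V i) : inj_fun V i v i = v.
Proof.
  unfold inj_fun. destruct (excluded_middle_informative (i = i)) as [e|e].
  - rewrite (proof_irrelevance _ e eq_refl). reflexivity.
  - contradiction.
Qed.

Lemma supported_inj_fun i (v : V i) : supported (i :: nil) (inj_fun V i v).
Proof.
  intros k Hk. unfold inj_fun.
  destruct (excluded_middle_informative (i = k)) as [e|e]; [|reflexivity].
  destruct Hk. left. exact e.
Qed.

Lemma ds_inj_flinear i : flinear (V i) DS (ds_inj V i).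
Proof.
  split; [intros u v | intros a u]; apply ds_eq; intro k; simpl; unfold inj_fun;
    destruct (excluded_middle_informative (i = k)) as [<-|_]; try reflexivity.
  - symmetry. apply fs_add_zero.
  - symmetry. apply fs_act_zero.
Qed.

Definition zero_entry (j : I) (x : forall i, V i) : forall i, V i :=
  fun k => match excluded_middle_informative (j = k) with
           | left _ => fs_zero (V k)
           | right _ => x k
           end.

Lemma zero_entry_same j x : zero_entry j x j = fs_zero (V j).
Proof.
  unfold zero_entry. destruct (excluded_middle_informative (j = j)); [reflexivity|].
  contradiction.
Qed.

Lemma zero_entry_neq j k x : j <> k -> zero_entry j x k = x k.
Proof. intro Hjk. unfold zero_entry. destruct (excluded_middle_informative (j = k)); tauto. Qed.

Lemma zero_entry_idem j x : zero_entry j (zero_entry j x) = zero_entry j x.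
Proof.
  apply functional_extensionality_dep. intro k. unfold zero_entry.
  destruct (excluded_middle_informative (j = k)); reflexivity.
Qed.

Lemma zero_entry_comm i j x : zero_entry i (zero_entry j x) = zero_entry j (zero_entry i x).
Proof.
  apply functional_extensionality_dep. intro k. unfold zero_entry.
  destruct (excluded_middle_informative (i = k)), (excluded_middle_informative (j = k));
    reflexivity.
Qed.

Lemma zero_entry_zero j : zero_entry j zero = zero.
Proof.
  apply functional_extensionality_dep. intro k. unfold zero_entry.
  destruct (excluded_middle_informative (j = k)); reflexivity.
Qed.

Lemma zero_entry_add j x y :
  zero_entry j (fun i => fs_add (V i) (x i) (y i)) =
  (fun i => fs_add (V i) (zero_entry j x i) (zero_entry j y i)).
Proof.
  apply functional_extensionality_dep. intro k. unfold zero_entry.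
  destruct (excluded_middle_informative (j = k)); [|reflexivity].
  symmetry. apply fs_add_zero.
Qed.

Lemma zero_entry_act j a x :
  zero_entry j (fun i => fs_act (V i) a (x i)) =
  (fun i => fs_act (V i) a (zero_entry j x i)).
Proof.
  apply functional_extensionality_dep. intro k. unfold zero_entry.
  destruct (excluded_middle_informative (j = k)); [|reflexivity].
  symmetry. apply fs_act_zero.
Qed.

Lemma supported_zero_entry j s x : supported (j :: s) x -> supported s (zero_entry j x).
Proof.
  intros Hx k Hk. unfold zero_entry.
  destruct (excluded_middle_informative (j = k)) as [e|e]; [reflexivity|].
  apply Hx. intros [H|H]; contradiction.
Qed.

Lemma inj_fun_add_zero_entry j x k :
  fs_add (V k) (inj_fun V j (x j) k) (zero_entry j x k) = x k.
Proof.
  unfold inj_fun, zero_entry.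
  destruct (excluded_middle_informative (j = k)) as [<-|_].
  - apply fs_addr0.
  - apply fs_add0.
Qed.

Lemma finsupp_zero_entry j x : finsupp V x -> finsupp V (zero_entry j x).
Proof.
  intros [s Hs]. exists s. intros k Hk. unfold zero_entry.
  destruct (excluded_middle_informative (j = k)); [reflexivity|].
  apply Hs, Hk.
Qed.

Definition ds_zero_entry (j : I) (x : DS) : DS :=
  exist _ _ (finsupp_zero_entry j (proj2_sig x)).

Lemma ds_decomp j (x : DS) :
  x = fs_add DS (ds_inj V j (proj1_sig x j)) (ds_zero_entry j x).
Proof. apply ds_eq. intro k. symmetry. apply inj_fun_add_zero_entry. Qed.

Lemma ds_ind (P : DS -> Prop) :
  P (fs_zero DS) ->
  (forall j (v : V j) x, P x -> P (fs_add DS (ds_inj V j v) x)) ->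
  forall x, P x.
Proof.
  intros H0 Hstep x. destruct (proj2_sig x) as [s Hs]. revert x Hs.
  induction s as [|j s IH]; intros x Hs.
  - replace x with (fs_zero DS); [exact H0|].
    apply ds_eq. intro i. symmetry. apply Hs, in_nil.
  - rewrite (ds_decomp j x). apply Hstep, IH. exact (supported_zero_entry Hs).
Qed.

Lemma ds_free_action : (forall i, free_action (V i)) -> free_action DS.
Proof.
  intros Hfree x a b Hx Hab.
  destruct (not_all_ex_not _ _ (fun H => Hx (ds_eq x (fs_zero DS) H))) as [i Hi].
  apply (Hfree i (proj1_sig x i)); [exact Hi|].
  exact (f_equal (fun y : DS => proj1_sig y i) Hab).
Qed.

Lemma ds_add_gen : (forall i (v : V i), add_gen (V i) (quasi_kernel (V i)) v) ->
  forall x : DS, add_gen DS (quasi_kernel DS) x.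
Proof.
  intro Hgen. apply ds_ind.
  - apply ag_zero.
  - intros j v x Hx. apply ag_add; [|exact Hx].
    apply (flinear_add_gen (ds_inj_flinear j)), Hgen.
Qed.

Lemma ds_near_vector_space :
  (forall i, near_vector_space (V i)) -> near_vector_space DS.
Proof.
  intro HV. split.
  - apply ds_free_action. intro i. apply (HV i).
  - apply ds_add_gen. intro i. apply (HV i).
Qed.

Lemma ds_flinear_ext (W : fspace F) (h h' : DS -> W) :
  flinear DS W h -> flinear DS W h' ->
  (forall i (v : V i), h (ds_inj V i v) = h' (ds_inj V i v)) ->
  forall x, h x = h' x.
Proof.
  intros Hh Hh' Hinj. apply ds_ind.
  - rewrite (flinear_zero Hh), (flinear_zero Hh'). reflexivity.
  - intros j v x Hx. rewrite (proj1 Hh), (proj1 Hh'), Hinj, Hx. reflexivity.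
Qed.

Section Lift.
Variables (W : fspace F) (f : forall i, V i -> W).
Hypothesis Hf : forall i, flinear (V i) W (f i).

Fixpoint lift_on (s : list I) (x : forall i, V i) : W :=
  match s with
  | nil => fs_zero W
  | j :: s' => fs_add W (f j (x j)) (lift_on s' (zero_entry j x))
  end.

Lemma lift_on_zero s : lift_on s zero = fs_zero W.
Proof.
  induction s as [|j s IH]; simpl; [reflexivity|].
  rewrite zero_entry_zero, IH, (flinear_zero (Hf j)). apply fs_add0.
Qed.

Lemma lift_on_add s : forall x y,
  lift_on s (fun i => fs_add (V i) (x i) (y i)) = fs_add W (lift_on s x) (lift_on s y).
Proof.
  induction s as [|j s IH]; intros x y; simpl.
  - symmetry. apply fs_add0.
  - rewrite zero_entry_add, IH, (proj1 (Hf j)), <- !fs_addA.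
    f_equal. apply fs_addCA.
Qed.

Lemma lift_on_act s : forall a x,
  lift_on s (fun i => fs_act (V i) a (x i)) = fs_act W a (lift_on s x).
Proof.
  induction s as [|j s IH]; intros a x; simpl.
  - symmetry. apply fs_act_zero.
  - rewrite zero_entry_act, IH, (proj2 (Hf j)), fs_actD. reflexivity.
Qed.

Lemma lift_on_decomp t j x : In j t ->
  lift_on t x = fs_add W (f j (x j)) (lift_on t (zero_entry j x)).
Proof.
  revert x. induction t as [|i t IH]; intros x Hj; [destruct Hj|]. simpl.
  destruct (excluded_middle_informative (i = j)) as [<-|Hij].
  - rewrite zero_entry_idem, zero_entry_same, (flinear_zero (Hf i)), fs_add0.
    reflexivity.
  - destruct Hj as [|Hj]; [contradiction|].
    rewrite (IH _ Hj), zero_entry_neq, (zero_entry_neq x (not_eq_sym Hij)),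
      zero_entry_comm by exact Hij.
    apply fs_addCA.
Qed.

Lemma lift_on_incl s : forall t x, incl s t -> supported s x -> lift_on t x = lift_on s x.
Proof.
  induction s as [|j s IH]; intros t x Hst Hx.
  - rewrite (supported_nil Hx). apply lift_on_zero.
  - destruct (incl_cons_inv Hst) as [Hj Hst'].
    simpl. rewrite (lift_on_decomp t j x Hj).
    f_equal. exact (IH t _ Hst' (supported_zero_entry Hx)).
Qed.

Lemma lift_on_indep s t x : supported s x -> supported t x -> lift_on s x = lift_on t x.
Proof.
  intros Hs Ht.
  rewrite <- (lift_on_incl (incl_appl t (incl_refl s)) Hs).
  apply lift_on_incl; [apply incl_appr, incl_refl | exact Ht].
Qed.

Definition ds_support (x : DS) : list I :=
  proj1_sig (ClassicalEpsilon.constructive_indefinite_description _ (proj2_sig x)).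

Lemma ds_support_spec (x : DS) : supported (ds_support x) (proj1_sig x).
Proof. exact (proj2_sig (ClassicalEpsilon.constructive_indefinite_description _ (proj2_sig x))). Qed.

Definition ds_lift (x : DS) : W := lift_on (ds_support x) (proj1_sig x).

Lemma ds_lift_on s (x : DS) : supported s (proj1_sig x) -> ds_lift x = lift_on s (proj1_sig x).
Proof. apply lift_on_indep, ds_support_spec. Qed.

Lemma ds_lift_flinear : flinear DS W ds_lift.
Proof.
  split.
  - intros x y. set (s := ds_support x ++ ds_support y).
    assert (Hx : supported s (proj1_sig x))
      by exact (supported_incl (incl_appl _ (incl_refl _)) (ds_support_spec x)).
    assert (Hy : supported s (proj1_sig y))
      by exact (supported_incl (incl_appr _ (incl_refl _)) (ds_support_spec y)).
    rewrite (ds_lift_on x Hx), (ds_lift_on y Hy),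
      (ds_lift_on (fs_add DS x y) (supported_add Hx Hy)).
    apply lift_on_add.
  - intros a x.
    rewrite (ds_lift_on (fs_act DS a x) (supported_act a (ds_support_spec x))).
    apply lift_on_act.
Qed.

Lemma ds_lift_inj i (v : V i) : ds_lift (ds_inj V i v) = f i v.
Proof.
  rewrite (ds_lift_on (ds_inj V i v) (supported_inj_fun v)). simpl.
  rewrite inj_fun_same. apply fs_addr0.
Qed.

End Lift.
End DirectSum.

Theorem mainTheorem3 (F : scalar_group) (I : Type) (V : I -> fspace F) :
  (forall i, near_vector_space (V i)) ->
  (near_vector_space (direct_sum V) /\
   forall i, flinear (V i) (direct_sum V) (ds_inj V i)) /\
  (forall (W : fspace F) (f : forall i, V i -> W),
     near_vector_space W ->
     (forall i, flinear (V i) W (f i)) ->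
     exists g : direct_sum V -> W,
       flinear (direct_sum V) W g /\
       (forall i (v : V i), g (ds_inj V i v) = f i v) /\
       (forall h : direct_sum V -> W,
          flinear (direct_sum V) W h ->
          (forall i (v : V i), h (ds_inj V i v) = f i v) ->
          forall x, h x = g x)).
Proof.
  intro HV. split; [split|].
  - apply ds_near_vector_space, HV.
  - apply ds_inj_flinear.
  - intros W f _ Hf. exists (ds_lift W f).
    assert (Hlift : flinear (direct_sum V) W (ds_lift W f)) by apply ds_lift_flinear, Hf.
    assert (Hinj : forall i (v : V i), ds_lift W f (ds_inj V i v) = f i v)
      by (intros; apply ds_lift_inj, Hf).
    split; [exact Hlift|split; [exact Hinj|]].
    intros h Hh Hh_inj. apply (ds_flinear_ext Hh Hlift).
    intros i v. rewrite Hh_inj, Hinj. reflexivity.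
Qed.
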